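(* Let $\ell$ be a prime and $n$ a positive integer. Suppose that $\mathcal{O}$ is an imaginary quadratic order of conductor coprime to $\ell$ in which $\ell$ splits into two distinct prime ideals whose classes have order $n$ in $\mathrm{Cl}(\mathcal{O})$. Then the discriminant $D(\mathcal{O})$ of $\mathcal{O}$ satisfies $|D(\mathcal{O})|\le 4\ell^n-1$.
   Context: $\mathrm{Cl}(\mathcal{O})$ denotes the class group (of invertible ideals) of the order $\mathcal{O}$. *)

From Stdlib Require Export ZArith Znumtheory.
Open Scope Z_scope.

Definition is_disc (d : Z) : Prop := d mod 4 = 0 \/ d mod 4 = 1.

(* The imaginary quadratic order of discriminant D (D < 0, is_disc D) is
   O_D = Z[tau], tau = (D + sqrt D)/2, tau^2 = D*tau + (D - D^2)/4.
   An element a + b*tau is represented by the pair (a, b). *)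
Definition qelt := (Z * Z)%type.

Definition qmul (D : Z) (x y : qelt) : qelt :=
  let (a, b) := x in let (c, d) := y in
  (a * c + b * d * ((D - D * D) / 4), a * d + b * c + b * d * D).

Definition qadd (x y : qelt) : qelt := (fst x + fst y, snd x + snd y).

Definition qzero : qelt := (0, 0).
Definition qone : qelt := (1, 0).

(* Conductor: the largest f > 0 with f^2 | D and D / f^2 a discriminant
   (so D = f^2 d_K with d_K the fundamental discriminant). *)
Definition is_conductor (D f : Z) : Prop :=
  0 < f /\ (f * f | D) /\ is_disc (D / (f * f)) /\
  forall g, 0 < g -> (g * g | D) -> is_disc (D / (g * g)) -> g <= f.

Definition ideal := qelt -> Prop.

Definition is_ideal (D : Z) (I : ideal) : Prop :=
  I qzero /\ (forall x y, I x -> I y -> I (qadd x y)) /\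
  (forall r x, I x -> I (qmul D r x)).

Definition ideal_eq (I J : ideal) : Prop := forall x, I x <-> J x.

Definition is_prime_ideal (D : Z) (P : ideal) : Prop :=
  is_ideal D P /\ ~ P qone /\ (exists x, P x /\ x <> qzero) /\
  forall a b, P (qmul D a b) -> P a \/ P b.

Definition unit_ideal : ideal := fun _ => True.
Definition pideal (D : Z) (alpha : qelt) : ideal :=
  fun x => exists r, x = qmul D r alpha.

Definition iprod (D : Z) (I J : ideal) : ideal :=
  fun x => forall K, is_ideal D K ->
    (forall i j, I i -> J j -> K (qmul D i j)) -> K x.

Fixpoint ipow (D : Z) (I : ideal) (k : nat) : ideal :=
  match k with
  | O => unit_ideal
  | S k' => iprod D (ipow D I k') I
  end.

Definition iscale (D : Z) (alpha : qelt) (I : ideal) : ideal :=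
  fun x => exists i, I i /\ x = qmul D alpha i.

Definition same_class (D : Z) (I J : ideal) : Prop :=
  exists alpha beta, alpha <> qzero /\ beta <> qzero /\
    ideal_eq (iscale D alpha I) (iscale D beta J).

Definition class_order (D : Z) (I : ideal) (n : nat) : Prop :=
  (0 < n)%nat /\ same_class D (ipow D I n) unit_ideal /\
  forall k, (0 < k < n)%nat -> ~ same_class D (ipow D I k) unit_ideal.

From Stdlib Require Import ZArith Zpow_facts Lia Morphisms.
Open Scope Z_scope.

(* Write P^n = (p) and Q^n = (s). As P^n Q^n = (l^n), N(p) N(s) = l^(2n), so one of the
   generators, say p = a + b tau, has norm at most l^n. No positive power P^m is
   generated by a rational integer: the generator would divide l^m, hence be a power
   l^j up to sign, and P^m = (l^j) = P^j Q^j is impossible after cancelling the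
   invertible ideals P^k (P^k Q^k is principal). So b <> 0, and also 2a + bD <> 0,
   since otherwise p^2 = -N(p). Hence 4 l^n >= 4 N(p) = (2a + bD)^2 - b^2 D >= 1 - D. *)

Definition qopp (x : qelt) : qelt := (- fst x, - snd x).

(* N(a + b tau) = (a + b tau)(a + b tau') with tau + tau' = D and tau tau' = (D^2 - D)/4. *)
Definition qnorm (D : Z) (x : qelt) : Z :=
  let (a, b) := x in a * a + a * b * D - b * b * ((D - D * D) / 4).

Fixpoint qpow (D : Z) (x : qelt) (k : nat) : qelt :=
  match k with O => qone | S k' => qmul D (qpow D x k') x end.

Ltac qsimpl :=
  repeat match goal with x : qelt |- _ => destruct x end;
  cbv [qmul qadd qopp qnorm qzero qone fst snd] in *.

Section Arithmetic.
Variable D : Z.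

Lemma qmul_comm x y : qmul D x y = qmul D y x.
Proof. qsimpl. f_equal; ring. Qed.

Lemma qmul_assoc x y z : qmul D x (qmul D y z) = qmul D (qmul D x y) z.
Proof. qsimpl. f_equal; ring. Qed.

Lemma qmul_add_distr_l x y z : qmul D x (qadd y z) = qadd (qmul D x y) (qmul D x z).
Proof. qsimpl. f_equal; ring. Qed.

Lemma qmul_add_distr_r x y z : qmul D (qadd x y) z = qadd (qmul D x z) (qmul D y z).
Proof. qsimpl. f_equal; ring. Qed.

Lemma qmul_1_l x : qmul D qone x = x.
Proof. qsimpl. f_equal; ring. Qed.

Lemma qmul_1_r x : qmul D x qone = x.
Proof. qsimpl. f_equal; ring. Qed.

Lemma qmul_0_l x : qmul D qzero x = qzero.
Proof. qsimpl. f_equal; ring. Qed.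

Lemma qmul_0_r x : qmul D x qzero = qzero.
Proof. qsimpl. f_equal; ring. Qed.

Lemma qmul_opp_r x y : qmul D x (qopp y) = qopp (qmul D x y).
Proof. qsimpl. f_equal; ring. Qed.

Lemma qnorm_mul x y : qnorm D (qmul D x y) = qnorm D x * qnorm D y.
Proof. qsimpl. ring. Qed.

Lemma qpow_rational l j : qpow D (l, 0) j = (l ^ Z.of_nat j, 0).
Proof.
  induction j as [|j IH]; cbn [qpow]; [reflexivity|].
  rewrite IH, Nat2Z.inj_succ, Z.pow_succ_r by lia. cbv [qmul]. f_equal; ring.
Qed.

(* [a + b tau] with [2a + bD = 0] is [b sqrt(D) / 2], whose square is rational. *)
Lemma qmul_diag_sqrt a b : 2 * a + b * D = 0 ->
  qmul D (a, b) (a, b) = qopp (qnorm D (a, b), 0).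
Proof.
  intros H. cbv [qmul qnorm qopp fst snd]. set (c := (D - D * D) / 4).
  f_equal.
  - transitivity (- (a * a + a * b * D - b * b * c) + a * (2 * a + b * D)); [ring|].
    rewrite H. ring.
  - transitivity (b * (2 * a + b * D)); [ring|]. rewrite H. ring.
Qed.

End Arithmetic.

Section Norm.
Variable D : Z.
Hypotheses (Hdisc : is_disc D) (Hneg : D < 0).

Lemma disc_quarter : 4 * ((D - D * D) / 4) = D - D * D.
Proof.
  pose proof (Z.div_mod D 4 ltac:(lia)) as E.
  set (q := D / 4) in E. set (r := D mod 4) in E.
  assert (D - D * D = (q - 4 * q * q - 2 * q * r) * 4) as ->.
  { destruct Hdisc as [H | H]; fold r in H; rewrite E, H; ring. }
  rewrite Z.div_mul by lia. ring.
Qed.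

Lemma qnorm_disc a b : 4 * qnorm D (a, b) = (2 * a + b * D) ^ 2 - b ^ 2 * D.
Proof. pose proof disc_quarter. cbv [qnorm]. nia. Qed.

Lemma qnorm_nonneg x : 0 <= qnorm D x.
Proof. destruct x as [a b]. pose proof (qnorm_disc a b). nia. Qed.

Lemma qnorm_eq_0 x : qnorm D x = 0 -> x = qzero.
Proof.
  destruct x as [a b]. intros H0. pose proof (qnorm_disc a b) as E.
  rewrite H0 in E. assert (b = 0) by nia. subst b. assert (a = 0) by nia. subst a.
  reflexivity.
Qed.

Lemma qmul_eq_0 x y : qmul D x y = qzero -> x = qzero \/ y = qzero.
Proof.
  intros H. assert (qnorm D x * qnorm D y = 0) as [Hx | Hy]%Z.mul_eq_0.
  { rewrite <- qnorm_mul, H. reflexivity. }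
  - left. now apply qnorm_eq_0.
  - right. now apply qnorm_eq_0.
Qed.

Lemma qmul_cancel_l a x y : a <> qzero -> qmul D a x = qmul D a y -> x = y.
Proof.
  intros Ha E.
  assert (qmul D a (qadd x (qopp y)) = qzero) as [? | Hxy]%qmul_eq_0; [|contradiction|].
  { rewrite qmul_add_distr_l, qmul_opp_r, E. qsimpl. f_equal; ring. }
  qsimpl. injection Hxy. intros. f_equal; lia.
Qed.

End Norm.

Definition ideal_sub (I J : ideal) : Prop := forall x, I x -> J x.

Lemma ideal_eq_sub I J : ideal_sub I J -> ideal_sub J I -> ideal_eq I J.
Proof. unfold ideal_eq, ideal_sub; firstorder. Qed.

Add Relation ideal ideal_eq
  reflexivity proved by (fun I x => iff_refl (I x))
  symmetry proved by (fun I J H x => iff_sym (H x))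
  transitivity proved by (fun I J K H1 H2 x => iff_trans (H1 x) (H2 x))
  as ideal_eq_rel.

Add Morphism ideal_sub with signature ideal_eq ==> ideal_eq ==> iff as ideal_sub_proper.
Proof. unfold ideal_eq, ideal_sub; firstorder. Qed.

Section Ideals.
Variable D : Z.

Lemma unit_ideal_is_ideal : is_ideal D unit_ideal.
Proof. repeat split. Qed.

Lemma iprod_is_ideal I J : is_ideal D (iprod D I J).
Proof.
  split; [|split].
  - intros K HK _. apply HK.
  - intros x y Hx Hy K HK Hp. apply HK; [apply Hx | apply Hy]; assumption.
  - intros r x Hx K HK Hp. apply HK, Hx; assumption.
Qed.

Lemma iprod_mem (I J : ideal) i j : I i -> J j -> iprod D I J (qmul D i j).
Proof. intros Hi Hj K _ Hp. auto. Qed.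

Lemma iprod_least (I J K : ideal) : is_ideal D K ->
  (forall i j, I i -> J j -> K (qmul D i j)) -> ideal_sub (iprod D I J) K.
Proof. intros HK Hp x Hx. apply Hx; assumption. Qed.

Lemma iprod_sub I J I' J' : ideal_sub I I' -> ideal_sub J J' ->
  ideal_sub (iprod D I J) (iprod D I' J').
Proof.
  intros HI HJ. apply iprod_least; [apply iprod_is_ideal|].
  intros i j Hi Hj. apply iprod_mem; auto.
Qed.

#[global] Instance iprod_proper : Proper (ideal_eq ==> ideal_eq ==> ideal_eq) (iprod D).
Proof.
  intros I I' HI J J' HJ.
  apply ideal_eq_sub; apply iprod_sub; intros x; apply HI || apply HJ.
Qed.

Lemma iprod_sub_r I J : is_ideal D J -> ideal_sub (iprod D I J) J.
Proof. intros HJ. apply iprod_least; [assumption|]. intros i j _ Hj. now apply HJ. Qed.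

Lemma iprod_comm I J : ideal_eq (iprod D I J) (iprod D J I).
Proof.
  enough (H : forall I J, ideal_sub (iprod D I J) (iprod D J I))
    by (apply ideal_eq_sub; apply H).
  clear I J. intros I J. apply iprod_least; [apply iprod_is_ideal|].
  intros i j Hi Hj. rewrite qmul_comm. now apply iprod_mem.
Qed.

Lemma iprod_sub_l I J : is_ideal D I -> ideal_sub (iprod D I J) I.
Proof. intros HI. rewrite iprod_comm. now apply iprod_sub_r. Qed.

(* For fixed [k] in [K], the [y] with [y k] in [I (J K)] form an ideal containing [I J]. *)
Lemma iprod_assoc_sub I J K :
  ideal_sub (iprod D (iprod D I J) K) (iprod D I (iprod D J K)).
Proof.
  apply iprod_least; [apply iprod_is_ideal|]. intros x k Hx Hk.
  destruct (iprod_is_ideal I (iprod D J K)) as (H0 & Hadd & Hmul).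
  refine (iprod_least I J (fun y => iprod D I (iprod D J K) (qmul D y k)) _ _ x Hx).
  - split; [|split].
    + now rewrite qmul_0_l.
    + intros a b Ha Hb. rewrite qmul_add_distr_r. auto.
    + intros r a Ha. rewrite <- qmul_assoc. auto.
  - intros i j Hi Hj. rewrite <- qmul_assoc. now apply iprod_mem, iprod_mem.
Qed.

Lemma iprod_assoc I J K :
  ideal_eq (iprod D I (iprod D J K)) (iprod D (iprod D I J) K).
Proof.
  apply ideal_eq_sub; [|apply iprod_assoc_sub].
  rewrite (iprod_comm I), (iprod_comm J), (iprod_comm (iprod D I J)), (iprod_comm I J).
  apply iprod_assoc_sub.
Qed.

Lemma iprod_iprod_comm A B I J :
  ideal_eq (iprod D (iprod D A B) (iprod D I J)) (iprod D (iprod D A I) (iprod D B J)).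
Proof.
  rewrite <- !iprod_assoc. apply iprod_proper; [reflexivity|].
  rewrite !iprod_assoc, (iprod_comm B I). reflexivity.
Qed.

Lemma iprod_unit_r I : is_ideal D I -> ideal_eq (iprod D I unit_ideal) I.
Proof.
  intros HI. apply ideal_eq_sub; [now apply iprod_sub_l|].
  intros x Hx. rewrite <- (qmul_1_r D x). now apply iprod_mem.
Qed.

Lemma pideal_is_ideal a : is_ideal D (pideal D a).
Proof.
  split; [|split].
  - exists qzero. now rewrite qmul_0_l.
  - intros x y [r ->] [s ->]. exists (qadd r s). now rewrite qmul_add_distr_r.
  - intros r x [s ->]. exists (qmul D r s). apply qmul_assoc.
Qed.

Lemma pideal_self a : pideal D a a.
Proof. exists qone. now rewrite qmul_1_l. Qed.

Lemma pideal_one : ideal_eq (pideal D qone) unit_ideal.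
Proof.
  apply ideal_eq_sub; intros x _; [exact I|]. exists x. now rewrite qmul_1_r.
Qed.

Lemma pideal_opp a : ideal_eq (pideal D (qopp a)) (pideal D a).
Proof. apply ideal_eq_sub; intros z [r ->]; exists (qopp r); qsimpl; f_equal; ring. Qed.

Lemma pideal_rational_abs a : ideal_eq (pideal D (a, 0)) (pideal D (Z.abs a, 0)).
Proof.
  destruct (Z.abs_spec a) as [[_ ->] | [_ ->]]; [reflexivity|].
  symmetry. apply (pideal_opp (a, 0)).
Qed.

Lemma pideal_mul a b :
  ideal_eq (iprod D (pideal D a) (pideal D b)) (pideal D (qmul D a b)).
Proof.
  apply ideal_eq_sub.
  - apply iprod_least; [apply pideal_is_ideal|]. intros i j [r ->] [s ->].
    exists (qmul D r s). qsimpl. f_equal; ring.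
  - intros x [r ->]. rewrite qmul_assoc. apply iprod_mem; [exists r|]; auto using pideal_self.
Qed.

Lemma iprod_pideal_l c X : is_ideal D X -> ideal_eq (iprod D (pideal D c) X) (iscale D c X).
Proof.
  intros HX. apply ideal_eq_sub.
  - apply iprod_least.
    + split; [|split].
      * exists qzero. split; [apply HX|]. now rewrite qmul_0_r.
      * intros x y [a [Ha ->]] [b [Hb ->]].
        exists (qadd a b). split; [now apply HX|]. now rewrite qmul_add_distr_l.
      * intros r x [a [Ha ->]]. exists (qmul D r a). split; [now apply HX|].
        rewrite !qmul_assoc, (qmul_comm D r c). reflexivity.
    + intros i j [r ->] Hj. exists (qmul D r j). split; [now apply HX|].
      rewrite !qmul_assoc, (qmul_comm D r c). reflexivity.
  - intros z [x [Hx ->]]. apply iprod_mem; auto using pideal_self.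
Qed.

Lemma ipow_is_ideal I k : is_ideal D (ipow D I k).
Proof. destruct k; [apply unit_ideal_is_ideal | apply iprod_is_ideal]. Qed.

#[global] Instance ipow_proper : Proper (ideal_eq ==> eq ==> ideal_eq) (ipow D).
Proof.
  intros I J H k _ <-. induction k as [|k IH]; cbn [ipow]; [reflexivity|]. now rewrite IH, H.
Qed.

Lemma ipow_sub I k : is_ideal D I -> (0 < k)%nat -> ideal_sub (ipow D I k) I.
Proof. intros HI Hk. destruct k as [|k]; [lia|]. now apply iprod_sub_r. Qed.

Lemma ipow_add I j k : ideal_eq (ipow D I (j + k)) (iprod D (ipow D I j) (ipow D I k)).
Proof.
  induction k as [|k IH].
  - rewrite Nat.add_0_r. symmetry. apply iprod_unit_r, ipow_is_ideal.
  - rewrite Nat.add_succ_r. cbn [ipow]. now rewrite IH, iprod_assoc.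
Qed.

Lemma ipow_iprod I J k :
  ideal_eq (ipow D (iprod D I J) k) (iprod D (ipow D I k) (ipow D J k)).
Proof.
  induction k as [|k IH]; cbn [ipow].
  - symmetry. apply iprod_unit_r, unit_ideal_is_ideal.
  - now rewrite IH, iprod_iprod_comm.
Qed.

Lemma ipow_pideal a k : ideal_eq (ipow D (pideal D a) k) (pideal D (qpow D a k)).
Proof.
  induction k as [|k IH]; cbn [ipow qpow].
  - symmetry. apply pideal_one.
  - now rewrite IH, pideal_mul.
Qed.

Lemma ipow_qpow_mem (I : ideal) x k : I x -> ipow D I k (qpow D x k).
Proof. intros Hx. induction k; [constructor|]. now apply iprod_mem. Qed.

End Ideals.

Section Principal.
Variable D : Z.
Hypotheses (Hdisc : is_disc D) (Hneg : D < 0).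

Lemma iscale_sub_cancel c X Y : c <> qzero ->
  ideal_sub (iscale D c X) (iscale D c Y) -> ideal_sub X Y.
Proof.
  intros Hc H x Hx. destruct (H (qmul D c x)) as [y [Hy Ey]]; [now exists x|].
  now rewrite (qmul_cancel_l D Hdisc Hneg c x y Hc Ey).
Qed.

(* Multiplying by [B] turns [A X = A Y] into [c X = c Y]. *)
Lemma iprod_cancel_l A B X Y c : c <> qzero ->
  ideal_eq (iprod D A B) (pideal D c) -> is_ideal D X -> is_ideal D Y ->
  ideal_eq (iprod D A X) (iprod D A Y) -> ideal_eq X Y.
Proof.
  intros Hc HAB HX HY HXY.
  assert (E : ideal_eq (iscale D c X) (iscale D c Y)).
  { rewrite <- !iprod_pideal_l, <- HAB, (iprod_comm D A B), <- !iprod_assoc, HXY by assumption.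
    reflexivity. }
  apply ideal_eq_sub; apply (iscale_sub_cancel c _ _ Hc); intros x; apply E.
Qed.

Lemma same_class_unit_principal I : is_ideal D I -> same_class D I unit_ideal ->
  exists p, ideal_eq I (pideal D p).
Proof.
  intros HI (al & be & Hal & Hbe & E).
  destruct (proj2 (E be)) as [p [Hp Ep]].
  { exists qone. split; [constructor|]. symmetry. apply qmul_1_r. }
  exists p. apply ideal_eq_sub.
  - intros x Hx. destruct (proj1 (E (qmul D al x))) as [u [_ Eu]]; [now exists x|].
    rewrite Ep, <- qmul_assoc in Eu. exists u.
    rewrite (qmul_cancel_l D Hdisc Hneg al x _ Hal Eu). apply qmul_comm.
  - intros x [r ->]. now apply HI.
Qed.

Lemma pideal_qnorm a b : ideal_eq (pideal D a) (pideal D b) -> qnorm D a = qnorm D b.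
Proof.
  intros E.
  destruct (proj1 (E a) (pideal_self D a)) as [r Er].
  destruct (proj2 (E b) (pideal_self D b)) as [s Es].
  apply (f_equal (qnorm D)) in Er, Es. rewrite qnorm_mul in Er, Es.
  pose proof (qnorm_nonneg D Hdisc Hneg r) as Hr. pose proof (qnorm_nonneg D Hdisc Hneg s).
  destruct (Z.eq_dec (qnorm D a) 0) as [Ha | Ha]; [nia|].
  assert (Hrs : qnorm D r * qnorm D s = 1) by (apply (Z.mul_cancel_r _ _ (qnorm D a)); nia).
  apply Z.eq_mul_1_nonneg in Hrs as [Hr1 _]; [nia | assumption].
Qed.

End Principal.

Section PrimeIdeals.
Variables (D : Z) (P Q : ideal).
Hypothesis HP : is_prime_ideal D P.

Lemma prime_ipow_not_one k : (0 < k)%nat -> ~ ipow D P k qone.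
Proof. intros Hk H1. apply HP, (ipow_sub D P k); [apply HP | assumption..]. Qed.

Lemma prime_qpow x k : (0 < k)%nat -> P (qpow D x k) -> P x.
Proof.
  destruct HP as (_ & H1 & _ & Hprime).
  induction k as [|k IH]; intros Hk Hx; [lia|]. cbn [qpow] in Hx.
  destruct (Hprime _ _ Hx) as [Hpow | ?]; [|assumption].
  destruct k as [|k]; [contradiction | apply IH; [lia | assumption]].
Qed.

Lemma ipow_sub_prime j k : is_ideal D Q -> (0 < j)%nat -> (0 < k)%nat ->
  ideal_sub (ipow D Q j) (ipow D P k) -> ideal_sub Q P.
Proof.
  intros HQ Hj Hk H x Hx. apply (prime_qpow x j Hj).
  apply (ipow_sub D P k); [apply HP | assumption |]. now apply H, ipow_qpow_mem.
Qed.

End PrimeIdeals.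

Section SplitPrime.
Variables (D l : Z) (P Q : ideal).
Hypotheses (Hdisc : is_disc D) (Hneg : D < 0) (Hl : prime l)
  (HP : is_prime_ideal D P) (HQ : is_prime_ideal D Q) (HPQ : ~ ideal_eq P Q)
  (Hsplit : ideal_eq (pideal D (l, 0)) (iprod D P Q)).

Lemma ipow_split j : ideal_eq (iprod D (ipow D P j) (ipow D Q j)) (pideal D (l ^ Z.of_nat j, 0)).
Proof. now rewrite <- ipow_iprod, <- Hsplit, ipow_pideal, qpow_rational. Qed.

Lemma lpow_neq_0 j : (l ^ Z.of_nat j, 0) <> qzero.
Proof.
  pose proof (prime_ge_2 l Hl). intros [= H0]. revert H0. apply Z.pow_nonzero; lia.
Qed.

Lemma ipow_neq_pideal_lpow m j : (0 < m)%nat ->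
  ~ ideal_eq (ipow D P m) (pideal D (l ^ Z.of_nat j, 0)).
Proof.
  intros Hm H. destruct (Nat.le_gt_cases m j) as [Hle | Hlt].
  - destruct (Nat.le_exists_sub m j Hle) as [t [-> _]].
    assert (E : ideal_eq (iprod D (ipow D P m) unit_ideal)
                         (iprod D (ipow D P m) (iprod D (ipow D P t) (ipow D Q (t + m))))).
    { rewrite iprod_unit_r, iprod_assoc, <- ipow_add by apply ipow_is_ideal.
      now rewrite (Nat.add_comm m t), ipow_split. }
    apply (iprod_cancel_l D Hdisc Hneg _ _ _ _ _ (lpow_neq_0 m) (ipow_split m))
      in E; [| apply unit_ideal_is_ideal | apply iprod_is_ideal].
    apply (prime_ipow_not_one D Q HQ (t + m)); [lia|].
    apply (iprod_sub_r D (ipow D P t)); [apply ipow_is_ideal|]. now apply E.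
  - destruct (Nat.le_exists_sub j m (Nat.lt_le_incl _ _ Hlt)) as [t [-> _]].
    assert (E : ideal_eq (iprod D (ipow D P j) (ipow D P t))
                         (iprod D (ipow D P j) (ipow D Q j))).
    { now rewrite <- ipow_add, Nat.add_comm, H, ipow_split. }
    apply (iprod_cancel_l D Hdisc Hneg _ _ _ _ _ (lpow_neq_0 j) (ipow_split j))
      in E; [| apply ipow_is_ideal..].
    destruct j as [|j].
    + apply (prime_ipow_not_one D P HP t); [lia|]. now apply E.
    + apply HPQ, ideal_eq_sub.
      * apply (ipow_sub_prime D Q P HQ t (S j)); [apply HP | lia | lia |]. intro. apply E.
      * apply (ipow_sub_prime D P Q HP (S j) t); [apply HQ | lia | lia |]. intro. apply E.
Qed.

Lemma ipow_neq_pideal_rational m a : (0 < m)%nat -> ~ ideal_eq (ipow D P m) (pideal D (a, 0)).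
Proof.
  intros Hm H. pose proof (prime_ge_2 l Hl).
  assert (HL : 0 < l ^ Z.of_nat m) by (apply Z.pow_pos_nonneg; lia).
  assert (Hdiv : (Z.abs a | l ^ Z.of_nat m)).
  { destruct (proj1 (H _) (iprod_sub_l D _ (ipow D Q m) (ipow_is_ideal D P m) _
                (proj2 (ipow_split m _) (pideal_self D _)))) as [[r1 r2] Er].
    cbv [qmul] in Er. injection Er as -> _. apply Z.divide_abs_l. exists r1. ring. }
  destruct (Zdivide_power_2 (Z.abs a) l (Z.of_nat m)) as [e He]; [lia | lia | assumption.. |].
  destruct (Z.lt_ge_cases e 0) as [He0 | He0].
  - rewrite Z.pow_neg_r in He by assumption. destruct Hdiv as [k Hk]. lia.
  - apply (ipow_neq_pideal_lpow m (Z.to_nat e) Hm).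
    now rewrite Z2Nat.id, <- He, <- pideal_rational_abs.
Qed.

Lemma qnorm_ipow_generator n p : (0 < n)%nat -> ideal_eq (ipow D P n) (pideal D p) ->
  1 - D <= 4 * qnorm D p.
Proof.
  intros Hn Hp. destruct p as [a b].
  assert (Hb : b <> 0) by (intros ->; exact (ipow_neq_pideal_rational n a Hn Hp)).
  assert (Hab : 2 * a + b * D <> 0).
  { intros H0. apply (ipow_neq_pideal_rational (n + n) (- qnorm D (a, b))); [lia|].
    now rewrite ipow_add, Hp, pideal_mul, qmul_diag_sqrt. }
  rewrite qnorm_disc by assumption.
  assert (1 <= b ^ 2 /\ 1 <= (2 * a + b * D) ^ 2) by (split; nia).
  nia.
Qed.

End SplitPrime.

Theorem lemma5p2 (l : Z) (n : nat) (D f : Z) (P Q : ideal) :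
  prime l -> (0 < n)%nat ->
  D < 0 -> is_disc D ->
  is_conductor D f -> Z.gcd f l = 1 ->
  is_prime_ideal D P -> is_prime_ideal D Q -> ~ ideal_eq P Q ->
  ideal_eq (pideal D (l, 0)) (iprod D P Q) ->
  class_order D P n -> class_order D Q n ->
  Z.abs D <= 4 * l ^ (Z.of_nat n) - 1.
Proof.
  intros Hl Hn HD Hdisc _ _ HP HQ HPQ Hsplit [_ [CP _]] [_ [CQ _]].
  destruct (same_class_unit_principal D Hdisc HD _ (ipow_is_ideal D P n) CP) as [p Hp].
  destruct (same_class_unit_principal D Hdisc HD _ (ipow_is_ideal D Q n) CQ) as [s Hs].
  assert (HQP : ~ ideal_eq Q P) by (intros H; now apply HPQ).
  assert (Hsplit' : ideal_eq (pideal D (l, 0)) (iprod D Q P)) by now rewrite iprod_comm.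
  pose proof (qnorm_ipow_generator D l P Q Hdisc HD Hl HP HQ HPQ Hsplit n p Hn Hp).
  pose proof (qnorm_ipow_generator D l Q P Hdisc HD Hl HQ HP HQP Hsplit' n s Hn Hs).
  assert (Hps : qnorm D p * qnorm D s = l ^ Z.of_nat n * l ^ Z.of_nat n).
  { rewrite <- qnorm_mul.
    replace (_ * _) with (qnorm D (l ^ Z.of_nat n, 0)) by (cbv [qnorm]; ring).
    apply pideal_qnorm; [assumption.. |].
    now rewrite <- pideal_mul, <- Hp, <- Hs, ipow_split. }
  pose proof (qnorm_nonneg D Hdisc HD p). pose proof (qnorm_nonneg D Hdisc HD s).
  assert (HL : 0 <= l ^ Z.of_nat n) by (apply Z.pow_nonneg; pose proof (prime_ge_2 l Hl); lia).
  rewrite Z.abs_neq by lia. nia.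
Qed.
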